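(* Every derivable separability judgment $\Sigma;\Gamma\vdash\tau:m$ has a derivation in which every occurrence of the conversion rule has, as its premise, an instance of the variable axiom. Equivalently, every derivable judgment is derivable in the system where the conversion rule is removed and replaced by the rule: from $(\alpha:m)\in\Gamma$ and $m\geq n$ infer $\Sigma;\Gamma\vdash\alpha:n$.
   Context: Type expressions: $\tau,\kappa ::= \alpha \mid \mathsf{float}\mid\mathsf{int}\mid\mathsf{bool}\mid t(\tau_1,\dots,\tau_n)\mid \tau\to\kappa\mid \tau_1\times\dots\times\tau_n\mid \forall\alpha.\tau\mid\exists\alpha.\tau\mid (\tau \text{ with } \kappa_1=\kappa_2)$ (the last is an equality guard), where $\alpha$ ranges over type variables and $t$ over type constructors. Separability modes are $\mathsf{Ind}<\mathsf{Sep}<\mathsf{Deepsep}$ (totally ordered). Mode composition: $\mathsf{Ind}\circ m=\mathsf{Ind}$, $\mathsf{Sep}\circ m=m$, $\mathsf{Deepsep}\circ m=\mathsf{Deepsep}$. A context $\Gamma$ is a finite list $\alpha_1:m_1,\dots,\alpha_k:m_k$; $\Gamma\le\Gamma'$ iff they have the same variables and pointwise $m\le m'$. A mode signature $\Sigma$ is a list of entries $t(\alpha_1:m_1,\dots,\alpha_n:m_n)$. The judgment $\Sigma;\Gamma\vdash\tau:m$ is defined by the rules: (variable axiom) if $(\alpha:m)\in\Gamma$ then $\Sigma;\Gamma\vdash\alpha:m$; (constructor) if $t(\alpha_1:m_1,\dots,\alpha_n:m_n)\in\Sigma$ and $\Sigma;\Gamma\vdash\tau_i:m\circ m_i$ for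 all $i$, then $\Sigma;\Gamma\vdash t(\tau_1,\dots,\tau_n):m$; (arrow) if $\Sigma;\Gamma\vdash\tau:m\circ\mathsf{Ind}$ and $\Sigma;\Gamma\vdash\kappa:m\circ\mathsf{Ind}$ then $\Sigma;\Gamma\vdash\tau\to\kappa:m$; (product) if $\Sigma;\Gamma\vdash\tau_i:m\circ\mathsf{Ind}$ for all $i$ then $\Sigma;\Gamma\vdash\tau_1\times\dots\times\tau_n:m$; (forall) if $\Sigma;\Gamma,\alpha:n\vdash\tau:m$ for some mode $n$ then $\Sigma;\Gamma\vdash\forall\alpha.\tau:m$; (exists) if $\Sigma;\Gamma,\alpha:\mathsf{Ind}\vdash\tau:m$ then $\Sigma;\Gamma\vdash\exists\alpha.\tau:m$; (conversion) if $\Sigma;\Gamma\vdash\tau:m$ and $m\ge n$ then $\Sigma;\Gamma\vdash\tau:n$; (guard) if for every $\Gamma'\ge\Gamma$ with $\Sigma;\Gamma'\vdash \kappa_1=\kappa_2$ we have $\Sigma;\Gamma'\vdash\tau:m$, then $\Sigma;\Gamma\vdash(\tau\text{ with }\kappa_1=\kappa_2):m$. Here $\Sigma;\Gamma\vdash\tau_1=\tau_2$ holds iff for every mode $m$, $\Sigma;\Gamma\vdash\tau_1:m \iff \Sigma;\Gamma\vdash\tau_2:m$. *)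

From Stdlib Require Import List.
Import ListNotations.

Inductive mode : Type := Ind | Sep | Deepsep.

Definition mode_rank (m : mode) : nat :=
  match m with Ind => 0 | Sep => 1 | Deepsep => 2 end.

Definition mode_le (m n : mode) : Prop := mode_rank m <= mode_rank n.

Definition mode_comp (m n : mode) : mode :=
  match m with Ind => Ind | Sep => n | Deepsep => Deepsep end.

Definition tcon := nat.

(* Type expressions; type variables are de Bruijn indices, index 0 being the
   most recently bound / rightmost variable of the context. *)
Inductive typ : Type :=
| TVar (i : nat)
| TFloat | TInt | TBool
| TCon (t : tcon) (args : list typ)
| TArrow (a b : typ)
| TProd (comps : list typ)
| TForall (body : typ)
| TExists (body : typ)
| TWith (tau k1 k2 : typ).   (* (tau with k1 = k2) *)

(* A context alpha_1:m_1,...,alpha_k:m_k is the list [m_k; ...; m_1]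
   (head = most recent variable, de Bruijn index 0). *)
Definition ctx := list mode.

Definition ctx_le (G G' : ctx) : Prop := Forall2 mode_le G G'.

(* Mode signature: entries t(alpha_1:m_1,...,alpha_n:m_n). *)
Definition signature := list (tcon * list mode).

(* Closure of a set of modes under the conversion rule
   (from tau : m and m >= n infer tau : n); the context and type are fixed. *)
Inductive conv_closure (S : mode -> Prop) : mode -> Prop :=
| cc_rule m : S m -> conv_closure S m
| cc_conv m n : conv_closure S m -> mode_le n m -> conv_closure S n.

(* Defined by structural recursion on tau (the guard rule refers negatively
   to derivability of the equality judgment on the subterms k1, k2, so the
   system is stratified by the structure of types). At each type, the set of
   derivable modes is the closure under conversion of the modes given by the
   rule for the head constructor. *)
Fixpoint der1 (Sg : signature) (G : ctx) (tau : typ) (n : mode) {struct tau} : Prop :=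
  conv_closure
    (fun m =>
       match tau with
       | TVar i => nth_error G i = Some m
       | TFloat | TInt | TBool => False
       | TCon t args =>
           exists ms, In (t, ms) Sg /\
             (fix ders (l : list typ) (ms : list mode) : Prop :=
                match l, ms with
                | [], [] => True
                | a :: l', mi :: ms' => der1 Sg G a (mode_comp m mi) /\ ders l' ms'
                | _, _ => False
                end) args ms
       | TArrow a b => der1 Sg G a (mode_comp m Ind) /\ der1 Sg G b (mode_comp m Ind)
       | TProd comps =>
           (fix all (l : list typ) : Prop :=
              match l with
              | [] => True
              | a :: l' => der1 Sg G a (mode_comp m Ind) /\ all l'
              end) comps
       | TForall body => exists k, der1 Sg (k :: G) body m
       | TExists body => der1 Sg (Ind :: G) body m
       | TWith t0 k1 k2 =>
           forall G', ctx_le G G' ->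
             (forall p, der1 Sg G' k1 p <-> der1 Sg G' k2 p) ->
             der1 Sg G' t0 m
       end) n.

Definition eq1 (Sg : signature) (G : ctx) (t1 t2 : typ) : Prop :=
  forall m, der1 Sg G t1 m <-> der1 Sg G t2 m.

Fixpoint der2 (Sg : signature) (G : ctx) (tau : typ) (m : mode) {struct tau} : Prop :=
  match tau with
  | TVar i => exists m', nth_error G i = Some m' /\ mode_le m m'
  | TFloat | TInt | TBool => False
  | TCon t args =>
      exists ms, In (t, ms) Sg /\
        (fix ders (l : list typ) (ms : list mode) : Prop :=
           match l, ms with
           | [], [] => True
           | a :: l', mi :: ms' => der2 Sg G a (mode_comp m mi) /\ ders l' ms'
           | _, _ => False
           end) args ms
  | TArrow a b => der2 Sg G a (mode_comp m Ind) /\ der2 Sg G b (mode_comp m Ind)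
  | TProd comps =>
      (fix all (l : list typ) : Prop :=
         match l with
         | [] => True
         | a :: l' => der2 Sg G a (mode_comp m Ind) /\ all l'
         end) comps
  | TForall body => exists k, der2 Sg (k :: G) body m
  | TExists body => der2 Sg (Ind :: G) body m
  | TWith t0 k1 k2 =>
      forall G', ctx_le G G' ->
        (forall p, der2 Sg G' k1 p <-> der2 Sg G' k2 p) ->
        der2 Sg G' t0 m
  end.

(** The modified judgment [der2] is downward closed in the mode, so it is the
    closure under conversion of its own inference rules, the variable rule
    being the plain axiom.  The original judgment [der1] is by definition the
    closure under conversion of the same rules applied to itself.  Induction
    on the type then shows that the two agree; this includes the equality
    guard, whose side condition only involves judgments at subterms, where
    the two systems already coincide. *)

From Stdlib Require Import List Lia.
Import ListNotations.

Definition subterms (tau : typ) : list typ :=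
  match tau with
  | TVar _ | TFloat | TInt | TBool => []
  | TCon _ args => args
  | TArrow a b => [a; b]
  | TProd comps => comps
  | TForall body | TExists body => [body]
  | TWith t0 k1 k2 => [t0; k1; k2]
  end.

Lemma typ_subterm_ind (P : typ -> Prop) :
  (forall tau, (forall s, In s (subterms tau) -> P s) -> P tau) ->
  forall tau, P tau.
Proof.
  intros step; fix IH 1; intros tau; apply step.
  assert (IHl : forall l s, In s l -> P s).
  { fix IHl 1; intros [|a l] s Hs; [destruct Hs|].
    destruct Hs as [<-|Hs]; [apply IH | exact (IHl l s Hs)]. }
  destruct tau; apply IHl.
Qed.

Lemma mode_le_refl m : mode_le m m.
Proof. unfold mode_le; lia. Qed.

Lemma mode_le_trans m n p : mode_le m n -> mode_le n p -> mode_le m p.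
Proof. unfold mode_le; lia. Qed.

Lemma mode_comp_le_l m n k : mode_le n m -> mode_le (mode_comp n k) (mode_comp m k).
Proof. unfold mode_le; destruct m, n, k; simpl; lia. Qed.

(** Named copies of the premise lists inlined in [der1] and [der2]. *)

Definition args_der (D : typ -> mode -> Prop) (m : mode) :=
  fix ders (l : list typ) (ms : list mode) : Prop :=
    match l, ms with
    | [], [] => True
    | a :: l', mi :: ms' => D a (mode_comp m mi) /\ ders l' ms'
    | _, _ => False
    end.

Definition comps_der (D : typ -> mode -> Prop) (m : mode) :=
  fix all (l : list typ) : Prop :=
    match l with
    | [] => True
    | a :: l' => D a (mode_comp m Ind) /\ all l'
    end.

Lemma args_der_impl (D D' : typ -> mode -> Prop) m m' l ms :
  (forall a k, In a l -> D a (mode_comp m k) -> D' a (mode_comp m' k)) ->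
  args_der D m l ms -> args_der D' m' l ms.
Proof.
  revert ms; induction l as [|a l IHl]; intros [|k ms] Himp; simpl; auto.
  intros [Ha Hl]; split; [apply Himp; simpl; auto | apply IHl; auto].
  intros b k' Hb; apply Himp; simpl; auto.
Qed.

Lemma comps_der_impl (D D' : typ -> mode -> Prop) m m' l :
  (forall a, In a l -> D a (mode_comp m Ind) -> D' a (mode_comp m' Ind)) ->
  comps_der D m l -> comps_der D' m' l.
Proof.
  induction l as [|a l IHl]; intros Himp; simpl; auto.
  intros [Ha Hl]; split; [apply Himp; simpl; auto | apply IHl; auto].
  intros b Hb; apply Himp; simpl; auto.
Qed.

Definition rule (Sg : signature) (D : ctx -> typ -> mode -> Prop)
    (G : ctx) (tau : typ) (m : mode) : Prop :=
  match tau with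
  | TVar i => nth_error G i = Some m
  | TFloat | TInt | TBool => False
  | TCon t args => exists ms, In (t, ms) Sg /\ args_der (D G) m args ms
  | TArrow a b => D G a (mode_comp m Ind) /\ D G b (mode_comp m Ind)
  | TProd comps => comps_der (D G) m comps
  | TForall body => exists k, D (k :: G) body m
  | TExists body => D (Ind :: G) body m
  | TWith t0 k1 k2 =>
      forall G', ctx_le G G' -> (forall p, D G' k1 p <-> D G' k2 p) -> D G' t0 m
  end.

Lemma rule_iff Sg (D D' : ctx -> typ -> mode -> Prop) tau :
  (forall s, In s (subterms tau) -> forall G m, D G s m <-> D' G s m) ->
  forall G m, rule Sg D G tau m <-> rule Sg D' G tau m.
Proof.
  intros Hsub G m;
    destruct tau as [| | | |t args|a b|comps|body|body|t0 k1 k2];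
    simpl in *; try tauto.
  - split; intros [ms [Hin Hargs]]; exists ms; split; auto;
      revert Hargs; apply args_der_impl; intros a k Ha; apply Hsub; auto.
  - rewrite (Hsub a), (Hsub b); auto; tauto.
  - split; apply comps_der_impl; intros a Ha; apply Hsub; auto.
  - split; intros [k Hk]; exists k; apply Hsub; auto.
  - apply Hsub; auto.
  - setoid_rewrite (Hsub t0); auto.
    setoid_rewrite (Hsub k1); auto.
    setoid_rewrite (Hsub k2); auto.
    tauto.
Qed.

Lemma der1_unfold Sg G tau n :
  der1 Sg G tau n = conv_closure (rule Sg (der1 Sg) G tau) n.
Proof. destruct tau; reflexivity. Qed.

Lemma conv_closure_min (S T : mode -> Prop) :
  (forall m, S m -> T m) -> (forall m n, T m -> mode_le n m -> T n) ->
  forall n, conv_closure S n -> T n.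
Proof. intros HST Hdown n H; induction H; eauto. Qed.

Lemma conv_closure_iff (S T : mode -> Prop) :
  (forall m, S m <-> T m) -> forall n, conv_closure S n <-> conv_closure T n.
Proof.
  intros HST n; split; apply conv_closure_min; try apply cc_conv;
    intros m Hm; apply cc_rule, HST, Hm.
Qed.

Lemma der2_mode_le Sg tau :
  forall G m n, der2 Sg G tau m -> mode_le n m -> der2 Sg G tau n.
Proof.
  induction tau as [tau IH] using typ_subterm_ind;
    intros G m n Hder Hnm; revert Hder; destruct tau; simpl in *; auto.
  - intros [m' [Hi Hm']]; exists m'; split; eauto using mode_le_trans.
  - intros [ms [Hin Hargs]]; exists ms; split; auto; revert Hargs.
    apply args_der_impl; intros a k Ha Hk.
    eapply IH; [exact Ha | exact Hk | apply mode_comp_le_l, Hnm].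
  - intros [Ha Hb]; split;
      (eapply IH; [ | eassumption | apply mode_comp_le_l, Hnm ]); simpl; auto.
  - apply comps_der_impl; intros a Ha Hk.
    eapply IH; [exact Ha | exact Hk | apply mode_comp_le_l, Hnm].
  - intros [k Hk]; exists k; eauto.
  - eauto.
  - intros Hder G' HG Heq; eauto.
Qed.

Lemma der2_conv_closure Sg G tau n :
  der2 Sg G tau n <-> conv_closure (rule Sg (der2 Sg) G tau) n.
Proof.
  split.
  - destruct tau; try (intros; apply cc_rule; assumption).
    intros [m [Hi Hnm]]; eapply cc_conv; [apply cc_rule, Hi | exact Hnm].
  - apply conv_closure_min; [ | apply der2_mode_le ].
    intros m; destruct tau; try (intros; assumption).
    intros Hi; exists m; split; [exact Hi | apply mode_le_refl].
Qed.

Lemma der1_iff_der2 Sg tau : forall G m, der1 Sg G tau m <-> der2 Sg G tau m.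
Proof.
  induction tau as [tau IH] using typ_subterm_ind; intros G m.
  rewrite der1_unfold, der2_conv_closure.
  apply conv_closure_iff, rule_iff, IH.
Qed.

Theorem mainTheorem1 (Sg : signature) (G : ctx) (tau : typ) (m : mode) :
  der1 Sg G tau m -> der2 Sg G tau m.
Proof. apply der1_iff_der2. Qed.
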